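(* Let $A=(a,\ ha+d,\ ha+3d,\ ha+5d,\ \dots,\ ha+(2k+1)d)$ where $\gcd(a,d)=1$, $a,h,d,k\in\mathbb{P}$, $a>2$, $3\le 2k+1\le a-1$. Write $a-1=(2k+1)s+t$ with $1\le t\le 2k+1$. If $t$ is even, then $$g(A)=ha\Big(\Big\lfloor\frac{a-2}{2k+1}\Big\rfloor+2\Big)+(a-1)d-a.$$ If $t$ is odd, then $$g(A)=\max\Big\{ha\Big(\Big\lfloor\frac{a-2}{2k+1}\Big\rfloor+1\Big)+(a-1)d-a,\ ha\Big(\Big\lfloor\frac{a-3}{2k+1}\Big\rfloor+2\Big)+(a-2)d-a\Big\}.$$ Furthermore, $$n(A)=hs\Big(ks+t+\frac12 s-\frac12\Big)+(a-1)\Big(\frac d2+h-\frac12\Big)+h\Big\lfloor\frac t2\Big\rfloor.$$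
   Context: For a tuple $A$ of positive integers with $\gcd(A)=1$, $\mathcal{NR}(A)$ is the finite set of nonnegative integers that cannot be written as a nonnegative integer combination of the entries of $A$; $g(A)=\max\mathcal{NR}(A)$ and $n(A)=|\mathcal{NR}(A)|$. $\mathbb{P}=\{1,2,\dots\}$. *)

From mathcomp Require Import all_boot all_order all_algebra.
Set Implicit Arguments. Unset Strict Implicit. Unset Printing Implicit Defensive.

Definition representable (A : seq nat) (n : nat) : Prop :=
  exists c : seq nat, size c = size A /\
    n = sumn [seq x.1 * x.2 | x <- zip c A].

Definition NR (A : seq nat) (m : nat) : Prop := ~ representable A m.

Definition is_frobenius (A : seq nat) (g : nat) : Prop :=
  NR A g /\ (forall m, NR A m -> m <= g).

Definition is_genus (A : seq nat) (N : nat) : Prop :=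
  exists l : seq nat, uniq l /\ (forall m, m \in l <-> NR A m) /\ size l = N.

Definition tupleA (a h d k : nat) : seq nat :=
  a :: [seq h * a + (2 * i + 1) * d | i <- iota 0 k.+1].

From mathcomp Require Import all_boot all_order all_algebra.
From mathcomp Require Import zify ring lra.

Set Implicit Arguments.
Unset Strict Implicit.
Unset Printing Implicit Defensive.

Import GRing.Theory.

(* A generator ha + (2i+1)d is ha + d + 2id, so the representable numbers are
   q a + j h a + m d with m a sum of j odd numbers at most 2k+1; the least such
   j is [min_parts k m].  As gcd(a, d) = 1, the numbers
   w m = min_parts k m * h * a + m d (m < a) are the least representable
   numbers in the a residue classes modulo a (the Apery set with respect to a),
   whence g(A) = max w - a and n(A) = sum_m floor(w m / a).  Since
   w m <= w (m + 2), the maximum is w (a-1) or w (a-2).  The number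
   min_parts k m grows by one every 2k+1 steps up to a parity correction, which
   evaluates sum_m min_parts k m, and sum_m floor(m d / a) = (a-1)(d-1)/2
   because m d mod a runs over all residues. *)

Lemma representable_nil n : representable [::] n <-> n = 0.
Proof.
split=> [[[|c0 c] [//= _ ->]] | ->] //.
by exists [::].
Qed.

Lemma representable_cons y A n :
  representable (y :: A) n <-> exists c n', n = c * y + n' /\ representable A n'.
Proof.
split=> [[[|c0 c] [//= [size_c] ->]] | [c0 [n' [-> [c [size_c ->]]]]]].
  by exists c0, (sumn [seq x.1 * x.2 | x <- zip c A]); split; last exists c.
by exists (c0 :: c); rewrite /= size_c.
Qed.

Lemma representable0 A : representable A 0.
Proof.
elim: A => [|y A IH]; first exact/representable_nil.
by apply/representable_cons; exists 0, 0.
Qed.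

Lemma representableD A x y :
  representable A x -> representable A y -> representable A (x + y).
Proof.
elim: A x y => [|z A IH] x y.
  by move=> /representable_nil-> /representable_nil->; apply/representable_nil.
move=> /representable_cons[c [x' [-> rep_x']]] /representable_cons[c' [y' [-> rep_y']]].
apply/representable_cons; exists (c + c'), (x' + y'); split; first ring.
exact: IH.
Qed.

Lemma representableM A q x : representable A x -> representable A (q * x).
Proof.
move=> rep_x; elim: q => [|q IH]; first exact: representable0.
by rewrite mulSn; apply: representableD.
Qed.

Lemma representable_mem A y : y \in A -> representable A y.
Proof.
elim: A => [|z A IH] //; rewrite in_cons => /predU1P[-> | /IH rep_y].
  apply/representable_cons; exists 1, 0; rewrite mul1n addn0.
  by split; last exact: representable0.
by apply/representable_cons; exists 0, y.
Qed.

Lemma perm_iota_modn (f : nat -> nat) a :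
  (forall m m', m < a -> m' < a -> f m = f m' %[mod a] -> m = m') ->
  perm_eq [seq f m %% a | m <- iota 0 a] (iota 0 a).
Proof.
move=> f_inj; have [->|a_gt0] := posnP a; first by [].
have uniq_f : uniq [seq f m %% a | m <- iota 0 a].
  by rewrite map_inj_in_uniq ?iota_uniq // => m m'; rewrite !mem_iota; apply: f_inj.
apply: uniq_perm; rewrite ?iota_uniq //.
have sub_f : {subset [seq f m %% a | m <- iota 0 a] <= iota 0 a}.
  by move=> _ /mapP[m _ ->]; rewrite mem_iota ltn_pmod.
by have [] := uniq_min_size uniq_f sub_f; rewrite !size_map size_iota.
Qed.

Lemma eq_modMr_coprime a d x y :
  coprime a d -> x * d = y * d %[mod a] -> x = y %[mod a].
Proof.
move=> co_ad; wlog le_yx : x y / y <= x => [hwlog|].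
  by case: (leqP y x) => [/hwlog//|/ltnW/hwlog hyx /esym/hyx].
move=> /eqP eq_xy; apply/eqP; move: eq_xy.
by rewrite !eqn_mod_dvd ?leq_mul2r ?le_yx ?orbT // -mulnBl Gauss_dvdl.
Qed.

Lemma sum_mul_divn a d : coprime a d ->
  2 * \sum_(0 <= m < a) m * d %/ a = (a - 1) * (d - 1).
Proof.
move=> co_ad; have [-> | a_gt0] := posnP a; first by rewrite big_geq.
have sum_id n : 2 * \sum_(0 <= m < n) m = n * (n - 1).
  elim: n => [|n IH]; first by rewrite big_geq.
  by rewrite big_nat_recr //= mulnDr IH !subn1; case: n {IH} => [|n] //=; lia.
have sum_mod : \sum_(0 <= m < a) m * d %% a = \sum_(0 <= m < a) m.
  rewrite -(big_map (fun m => m * d %% a) xpredT id); apply: perm_big.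
  rewrite /index_iota subn0.
  apply: perm_iota_modn => m m' lt_ma lt_m'a /(eq_modMr_coprime co_ad).
  by rewrite !modn_small.
have sum_div : \sum_(0 <= m < a) m * d =
               a * \sum_(0 <= m < a) m * d %/ a + \sum_(0 <= m < a) m.
  rewrite -sum_mod big_distrr -big_split; apply: eq_bigr => m _.
  by rewrite /= (mulnC a) -divn_eq.
rewrite -big_distrl /= in sum_div.
have := sum_id a; nia.
Qed.

Section AperySet.

Variables (A : seq nat) (a : nat) (w : nat -> nat).
Hypothesis a_gt0 : 0 < a.
Hypothesis a_in_A : a \in A.
Hypothesis w_inj : forall m m', m < a -> m' < a -> w m = w m' %[mod a] -> m = m'.
Hypothesis w_repr : forall m, m < a -> representable A (w m).
Hypothesis w_min :
  forall m n, m < a -> n = w m %[mod a] -> representable A n -> w m <= n.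

Lemma apery_class n : exists2 m, m < a & n = w m %[mod a].
Proof.
have : n %% a \in [seq w m %% a | m <- iota 0 a].
  by rewrite (perm_mem (perm_iota_modn w_inj)) mem_iota ltn_pmod.
by case/mapP=> m; rewrite mem_iota add0n => lt_ma eq_nw; exists m.
Qed.

Lemma NR_apery m n : m < a -> n = w m %[mod a] -> NR A n <-> n < w m.
Proof.
move=> lt_ma eq_nw; split=> [NRn | lt_nw rep_n].
  rewrite ltnNge; apply/negP=> le_wn; apply: NRn.
  have /dvdnP[q eq_q] : a %| n - w m by rewrite -eqn_mod_dvd // eq_nw.
  rewrite -(subnK le_wn) eq_q; apply: representableD (w_repr lt_ma).
  exact/representableM/representable_mem.
by have := w_min lt_ma eq_nw rep_n; rewrite leqNgt lt_nw.
Qed.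

Lemma NR_add_leq_apery m n : m < a -> n = w m %[mod a] -> NR A n -> n + a <= w m.
Proof.
move=> lt_ma eq_nw NRn; have lt_nw := (NR_apery lt_ma eq_nw).1 NRn.
have dvd_a : a %| w m - n by rewrite -eqn_mod_dvd 1?ltnW // eq_nw.
by have := dvdn_leq (_ : 0 < w m - n) dvd_a; lia.
Qed.

Lemma frobenius_apery m : m < a -> a <= w m ->
  (forall m', m' < a -> w m' <= w m) -> is_frobenius A (w m - a).
Proof.
move=> lt_ma le_aw w_max; split.
  apply/(NR_apery lt_ma); last by rewrite ltn_subrL a_gt0 (leq_trans a_gt0).
  by rewrite -(modnDr (w m - a)) subnK.
move=> n NRn; have [m' lt_m'a eq_n] := apery_class n.
have := NR_add_leq_apery lt_m'a eq_n NRn; have := w_max _ lt_m'a; lia.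
Qed.

Lemma genus_apery : is_genus A (\sum_(0 <= m < a) w m %/ a).
Proof.
set L := [seq w m %% a + a * i | m <- iota 0 a, i <- iota 0 (w m %/ a)].
have mod_L m i : (w m %% a + a * i) %% a = w m %% a.
  by rewrite mulnC addnC modnMDl modn_mod.
exists L; split; [|split].
- apply: allpairs_uniq_dep => [|m _|]; rewrite ?iota_uniq // => -[? ?] [? ?].
  move=> /allpairsPdep[m1 [i1 [m1_in _ [-> ->]]]].
  move=> /allpairsPdep[m2 [i2 [m2_in _ [-> ->]]]] /= eq_L.
  rewrite !mem_iota /= in m1_in m2_in.
  have eq_m : m1 = m2 by apply: w_inj; rewrite // -(mod_L m1 i1) eq_L mod_L.
  by subst m2; move/eqP: eq_L; rewrite eqn_add2l eqn_mul2l eqn0Ngt a_gt0 => /eqP->.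
- move=> n; split.
    case/allpairsPdep=> m [i [m_in i_in ->]].
    rewrite !mem_iota /= !add0n in m_in i_in.
    apply/(NR_apery m_in); first by rewrite mod_L.
    by have := divn_eq (w m) a; nia.
  move=> NRn; have [m lt_ma eq_n] := apery_class n.
  have lt_nw := (NR_apery lt_ma eq_n).1 NRn.
  apply/allpairsPdep; exists m, (n %/ a); rewrite !mem_iota /=; split=> //.
    by have := divn_eq n a; have := divn_eq (w m) a; nia.
  by rewrite -eq_n mulnC addnC -divn_eq.
- rewrite size_allpairs_dep sumnE big_map /index_iota subn0.
  by apply: eq_bigr => m _; rewrite size_iota.
Qed.

End AperySet.

(* The least number of parts of a partition of m into odd parts at most 2k+1,
   i.e. the least j >= m / (2k+1) with j = m (mod 2). *)
Definition min_parts k m :=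
  let c := (m + 2 * k) %/ (2 * k + 1) in c + odd (c + m).

Lemma ceil_div_bounds k m :
  m <= (m + 2 * k) %/ (2 * k + 1) * (2 * k + 1) <= m + 2 * k.
Proof.
have := divn_eq (m + 2 * k) (2 * k + 1).
have : (m + 2 * k) %% (2 * k + 1) < 2 * k + 1 by rewrite ltn_pmod // addn1.
lia.
Qed.

Lemma min_parts_spec k m :
  exists2 u, m = min_parts k m + 2 * u & u <= k * min_parts k m.
Proof.
have := ceil_div_bounds k m; rewrite /min_parts.
set c := _ %/ _ => c_bounds.
have le_cm : c <= m by nia.
exists ((m - c - odd (c + m)) %/ 2); lia.
Qed.

Lemma min_parts_min k m j u : m = j + 2 * u -> u <= k * j -> min_parts k m <= j.
Proof.
have := ceil_div_bounds k m; rewrite /min_parts.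
set c := _ %/ _ => c_bounds eq_m le_u.
have lt_cj : c < j.+1 by rewrite -(ltn_pmul2r (_ : 0 < 2 * k + 1)) //; nia.
lia.
Qed.

Lemma min_parts_leq k m j : m + 2 * k + 1 <= (2 * k + 1) * j -> min_parts k m <= j.
Proof.
have := ceil_div_bounds k m; rewrite /min_parts.
set c := _ %/ _ => c_bounds le_m.
have lt_cj : c < j by rewrite -(ltn_pmul2r (_ : 0 < 2 * k + 1)) //; nia.
lia.
Qed.

Lemma min_parts_leqSS k m : min_parts k m <= min_parts k m.+2.
Proof.
have [u eq_m le_u] := min_parts_spec k m.+2.
case: u eq_m le_u => [|u] eq_m le_u; first by have [v ? _] := min_parts_spec k m; lia.
by apply: (min_parts_min (u := u)); lia.
Qed.

Lemma min_parts_gt0 k m : 0 < m -> 0 < min_parts k m.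
Proof. by have [u eq_m le_u] := min_parts_spec k m; nia. Qed.

Lemma min_parts0 k : min_parts k 0 = 0.
Proof. by have [u] := min_parts_spec k 0; lia. Qed.

Lemma min_parts_block k q r :
  r < 2 * k + 1 -> min_parts k ((2 * k + 1) * q + 1 + r) = q + 1 + odd r.
Proof.
move=> lt_r; rewrite /min_parts.
have -> : ((2 * k + 1) * q + 1 + r + 2 * k) %/ (2 * k + 1) = q + 1.
  rewrite (_ : _ + 2 * k = (q + 1) * (2 * k + 1) + r); last by lia.
  by rewrite divnMDl ?divn_small ?addn0 // addn1.
lia.
Qed.

Lemma sum_min_parts_block k q r : r <= 2 * k + 1 ->
  \sum_(0 <= m < (2 * k + 1) * q + 1 + r) min_parts k m =
  \sum_(0 <= m < (2 * k + 1) * q + 1) min_parts k m + r * (q + 1) + r./2.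
Proof.
elim: r => [|r IH] le_r; first by rewrite !addn0.
by rewrite addnS big_nat_recr //= IH 1?ltnW // min_parts_block //; lia.
Qed.

Lemma sum_min_parts k q r : r <= 2 * k + 1 ->
  2 * \sum_(0 <= m < (2 * k + 1) * q + 1 + r) min_parts k m =
  (2 * k + 1) * q * (q + 1) + 2 * k * q + 2 * (r * (q + 1) + r./2).
Proof.
move=> le_r; rewrite sum_min_parts_block //.
suff full : 2 * \sum_(0 <= m < (2 * k + 1) * q + 1) min_parts k m =
            (2 * k + 1) * q * (q + 1) + 2 * k * q by lia.
elim: q => [|q IH]; first by rewrite muln0 add0n big_nat1 min_parts0; lia.
rewrite (_ : _ * q.+1 + 1 = (2 * k + 1) * q + 1 + (2 * k + 1)); last by ring.
by rewrite sum_min_parts_block // !mulnDr IH; lia.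
Qed.

Lemma representable_odd_gens a h d p len n :
  representable [seq h * a + (2 * i + 1) * d | i <- iota p len] n ->
  exists j u, u + j <= (p + len) * j /\ n = j * h * a + (j + 2 * u) * d.
Proof.
elim: len p n => [|len IH] p n /=.
  by move=> /representable_nil->; exists 0, 0; rewrite !muln0.
move=> /representable_cons[c [n' [-> /IH[j [u [le_u ->]]]]]].
by exists (c + j), (c * p + u); split; nia.
Qed.

Lemma representable_tupleA_parts a h d k j u : u <= k * j ->
  representable (tupleA a h d k) (j * h * a + (j + 2 * u) * d).
Proof.
elim: j u => [|j IH] u le_u.
  by rewrite muln0 leqn0 in le_u; rewrite (eqP le_u) !mul0n; apply: representable0.
set i := minn u k.
have gen_i : representable (tupleA a h d k) (h * a + (2 * i + 1) * d).
  apply/representable_mem/mem_behead/mapP; exists i => //.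
  by rewrite mem_iota add0n ltnS geq_minr.
have -> : j.+1 * h * a + (j.+1 + 2 * u) * d =
          h * a + (2 * i + 1) * d + (j * h * a + (j + 2 * (u - i)) * d).
  by rewrite /i; nia.
by apply: representableD gen_i (IH _ _); lia.
Qed.

Lemma representable_tupleA a h d k n :
  representable (tupleA a h d k) n <->
  exists q j u, u <= k * j /\ n = q * a + (j * h * a + (j + 2 * u) * d).
Proof.
split=> [| [q [j [u [le_u ->]]]]].
  move=> /representable_cons[q [n' [-> /representable_odd_gens[j [u [le_u ->]]]]]].
  by exists q, j, u; split; first nia.
apply: representableD (representable_tupleA_parts _ _ _ le_u).
exact/representableM/representable_mem/mem_head.
Qed.

(* Indexed by m < a rather than by the residue m d modulo a. *)
Definition tupleA_apery a h d k m := min_parts k m * h * a + m * d.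

Section TupleA.

Variables a h d k : nat.
Hypothesis co_ad : coprime a d.
Hypothesis k_lt_a : 2 * k + 2 <= a.

Local Notation A := (tupleA a h d k).
Local Notation w := (tupleA_apery a h d k).

Lemma tupleA_apery_mod m : w m = m * d %[mod a].
Proof. by rewrite /tupleA_apery modnMDl. Qed.

Lemma tupleA_apery_inj m m' : m < a -> m' < a -> w m = w m' %[mod a] -> m = m'.
Proof.
move=> lt_ma lt_m'a; rewrite !tupleA_apery_mod => /(eq_modMr_coprime co_ad).
by rewrite !modn_small.
Qed.

Lemma tupleA_apery_repr m : representable A (w m).
Proof.
have [u eq_m le_u] := min_parts_spec k m.
by apply/representable_tupleA; exists 0, (min_parts k m), u; rewrite -eq_m.
Qed.

Lemma tupleA_apery_min m n :
  m < a -> n = w m %[mod a] -> representable A n -> w m <= n.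
Proof.
move=> lt_ma eq_n /representable_tupleA[q [j [u [le_u eq_qju]]]].
have : j + 2 * u = m %[mod a].
  apply: (eq_modMr_coprime co_ad).
  by rewrite -(tupleA_apery_mod m) -eq_n eq_qju addnA -mulnDl modnMDl.
rewrite (modn_small lt_ma) => eq_jum.
(* j + 2u is either m or at least m + a > m + 2k + 1, which costs a part. *)
have [le_j le_m] : min_parts k m <= j /\ m <= j + 2 * u.
  have := divn_eq (j + 2 * u) a; rewrite eq_jum.
  case: (_ %/ a) => [|p] eq_ju.
    by split; [apply: (min_parts_min _ le_u) |]; lia.
  by split; [apply: min_parts_leq |]; nia.
have := leq_mul (leq_mul le_j (leqnn h)) (leqnn a).
have := leq_mul le_m (leqnn d).
rewrite eq_qju /tupleA_apery; lia.
Qed.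

Lemma tupleA_apery_leqSS m : w m <= w m.+2.
Proof.
apply: leq_add; apply: leq_mul => //; last exact: leqW.
by apply: leq_mul => //; apply: min_parts_leqSS.
Qed.

Lemma tupleA_apery_leq_max m : m < a -> w m <= maxn (w (a - 1)) (w (a - 2)).
Proof.
move=> lt_ma.
have le_w i : w m <= w (m + 2 * i).
  elim: i => [|i IH]; first by rewrite addn0.
  rewrite (_ : m + 2 * i.+1 = (m + 2 * i).+2); last by lia.
  exact: leq_trans IH (tupleA_apery_leqSS _).
have [<- | <-] : m + 2 * ((a - 1 - m) %/ 2) = a - 1 \/
                 m + 2 * ((a - 1 - m) %/ 2) = a - 2 by lia.
  by rewrite leq_max le_w.
by rewrite leq_max le_w orbT.
Qed.

Lemma frobenius_tupleA :
  2 < a -> 0 < h -> is_frobenius A (maxn (w (a - 1)) (w (a - 2)) - a).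
Proof.
move=> a_gt2 h_gt0; have a_gt0 : 0 < a by lia.
have frob m : 0 < m < a ->
    (forall m', m' < a -> w m' <= w m) -> is_frobenius A (w m - a).
  move=> /andP[m_gt0 lt_ma].
  apply: (frobenius_apery a_gt0 (mem_head _ _) tupleA_apery_inj
            (fun m _ => tupleA_apery_repr m) tupleA_apery_min lt_ma).
  have := leq_mul (leq_mul (min_parts_gt0 k m_gt0) h_gt0) (leqnn a).
  by rewrite /tupleA_apery; lia.
by case: (leqP (w (a - 2)) (w (a - 1))) => le_w;
  apply: frob => [|m' /tupleA_apery_leq_max]; lia.
Qed.

Lemma genus_tupleA : is_genus A (\sum_(0 <= m < a) w m %/ a).
Proof.
have a_gt0 : 0 < a by lia.
exact: (genus_apery a_gt0 (mem_head _ _) tupleA_apery_inj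
          (fun m _ => tupleA_apery_repr m) tupleA_apery_min).
Qed.

End TupleA.

Lemma tupleA_apery_max_value a h d k s t :
  2 < a -> a - 1 = (2 * k + 1) * s + t -> 0 < t <= 2 * k + 1 ->
  maxn (tupleA_apery a h d k (a - 1)) (tupleA_apery a h d k (a - 2)) - a =
  if odd t then
    maxn (h * a * ((a - 2) %/ (2 * k + 1) + 1) + (a - 1) * d - a)
         (h * a * ((a - 3) %/ (2 * k + 1) + 2) + (a - 2) * d - a)
  else h * a * ((a - 2) %/ (2 * k + 1) + 2) + (a - 1) * d - a.
Proof.
move=> a_gt2 eq_a /andP[t_gt0 le_t]; rewrite /tupleA_apery.
have div_eq q r : r < 2 * k + 1 -> (q * (2 * k + 1) + r) %/ (2 * k + 1) = q.
  by move=> lt_r; rewrite divnMDl ?divn_small ?addn0 //; lia.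
have -> : (a - 2) %/ (2 * k + 1) = s.
  by rewrite (_ : a - 2 = s * (2 * k + 1) + (t - 1)) ?div_eq; lia.
have -> : min_parts k (a - 1) = s + 1 + ~~ odd t.
  by rewrite (_ : a - 1 = (2 * k + 1) * s + 1 + (t - 1)) ?min_parts_block; lia.
have -> : (a - 1) * d = (a - 2) * d + d by rewrite addnC -mulSn; congr (_ * _); lia.
case: (ltnP 1 t) => [t_gt1 | t_le1].
  have -> : (a - 3) %/ (2 * k + 1) = s.
    by rewrite (_ : a - 3 = s * (2 * k + 1) + (t - 2)) ?div_eq; lia.
  have -> : min_parts k (a - 2) = s + 1 + odd t.
    by rewrite (_ : a - 2 = (2 * k + 1) * s + 1 + (t - 2)) ?min_parts_block; lia.
  by move: ((a - 2) * d) => D; case: odd; lia.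
have t1 : t = 1 by lia.
case: s eq_a => [|s] eq_a; first lia.
have -> : (a - 3) %/ (2 * k + 1) = s.
  by rewrite (_ : a - 3 = s * (2 * k + 1) + 2 * k) ?div_eq; lia.
have -> : min_parts k (a - 2) = s.+1.
  by rewrite (_ : a - 2 = (2 * k + 1) * s + 1 + 2 * k) ?min_parts_block; lia.
by rewrite t1 /=; move: ((a - 2) * d) => D; lia.
Qed.

Lemma tupleA_genus_value a h d k s t :
  0 < a -> 0 < d -> coprime a d -> a - 1 = (2 * k + 1) * s + t -> t <= 2 * k + 1 ->
  2 * \sum_(0 <= m < a) tupleA_apery a h d k m %/ a + h * s + (a - 1) =
  h * s * (2 * k * s + 2 * t + s) + (a - 1) * (d + 2 * h) + 2 * h * t./2.
Proof.
move=> a_gt0 d_gt0 co_ad eq_a le_t.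
have -> : \sum_(0 <= m < a) tupleA_apery a h d k m %/ a =
          (\sum_(0 <= m < a) min_parts k m) * h + \sum_(0 <= m < a) m * d %/ a.
  by rewrite big_distrl -big_split; apply: eq_bigr => m _; rewrite divnMDl.
have := sum_mul_divn co_ad.
have := sum_min_parts s le_t; rewrite (_ : _ * s + 1 + t = a); last by lia.
rewrite eq_a; nia.
Qed.

Theorem mainTheorem8 (a h d k s t : nat) :
  0 < a -> 0 < h -> 0 < d -> 0 < k ->
  coprime a d -> 2 < a ->
  3 <= 2 * k + 1 <= a - 1 ->
  a - 1 = (2 * k + 1) * s + t -> 1 <= t <= 2 * k + 1 ->
  (~~ odd t ->
     is_frobenius (tupleA a h d k)
       (h * a * ((a - 2) %/ (2 * k + 1) + 2) + (a - 1) * d - a)) /\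
  (odd t ->
     is_frobenius (tupleA a h d k)
       (maxn (h * a * ((a - 2) %/ (2 * k + 1) + 1) + (a - 1) * d - a)
             (h * a * ((a - 3) %/ (2 * k + 1) + 2) + (a - 2) * d - a))) /\
  exists N : nat, is_genus (tupleA a h d k) N /\
    (N%:R : rat)%R =
      ((h * s)%:R * ((k * s)%:R + t%:R + s%:R / 2 - 1 / 2)
      + (a - 1)%:R * (d%:R / 2 + h%:R - 1 / 2)
      + (h * t./2)%:R)%R.
Proof.
move=> a_gt0 h_gt0 d_gt0 _ co_ad a_gt2 /andP[_ le_ka] eq_a t_bounds.
have k_lt_a : 2 * k + 2 <= a by lia.
have frob := frobenius_tupleA co_ad k_lt_a a_gt2 h_gt0.
rewrite (tupleA_apery_max_value h d a_gt2 eq_a t_bounds) in frob.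
split; [|split].
- by move=> /negbTE t_even; rewrite t_even in frob.
- by move=> t_odd; rewrite t_odd in frob.
exists (\sum_(0 <= m < a) tupleA_apery a h d k m %/ a).
split; first exact: genus_tupleA.
have /andP[_ le_t] := t_bounds.
have := congr1 (fun n => (n%:R : rat)%R)
                (tupleA_genus_value h a_gt0 d_gt0 co_ad eq_a le_t).
by rewrite !natrD !natrM => genus_eq; lra.
Qed.
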